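(* In the adjusted bounding box center construction described in the context, let $i\in\{1,\dots,k\}$ be such that $B(P_i)$ is incomplete, and (in the coordinate system of $P_i$, after the normalizing reflection/rotation) suppose $q^{\star}_i\in\{(x,y)\in B(P_i): x\ge {q_i}_x \text{ or } y\ge {q_i}_y\}$. Then $\lVert q^{\star}_i-q_i\rVert_1\le \tfrac12\, l(B(P_i))$.
   Context: Setting: $P\subset\mathbb{R}^2$ finite, partitioned into nonempty $P_1,\dots,P_k$. A rectilinear Steiner tree for finite $S\subset\mathbb{R}^2$ is a tree embedded in the plane with horizontal/vertical segments as edges whose vertex set contains $S$; length = sum of $\ell_1$ edge lengths. A two-level rectilinear Steiner tree is $(T_{top},T_1,\dots,T_k)$ with $T_i$ a rectilinear Steiner tree for $P_i$ and $T_{top}$ a rectilinear Steiner tree intersecting every $T_i$; length $l(T_{top})+\sum_i l(T_i)$. $B(S)$ is the smallest axis-parallel rectangle containing $S$, $l(B(S))$ its width plus height. $\beta\in[0,1]$ is a parameter. Connection points: the coordinate system of $P_i$ has its origin at the center of $B(P_i)$. $B(P_i)$ is complete if $P_i$ has a point in each of the four quadrants of this coordinate system, otherwise incomplete. If incomplete, after a reflection/rotation of the plane (by a symmetry of the axis-parallel square), assume no point of $P_i$ lies in the lower-left quadrant and the width of $B(P_i)$ is at least its height; let $t_i^{\max}$ be half the height of $B(P_i)$, and in the coordinates of $P_i$ set $t_i^1=\max\{s\in[0,t_i^{\max}]: P_i\cap\{(x,y):x<s,y<s\}=\emptyset\}$, $t_i^2=\min\{s\in[0,t_i^{\max}]: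 P_i\cap\{(x,y):x>s,y>s\}=\emptyset\}$, $t_i=\min\{t_i^1,t_i^2,\beta t_i^{\max}\}$, and $q_i:=(t_i,t_i)$ in these coordinates. $T^{\star}=(T^{\star}_{top},T^{\star}_1,\dots,T^{\star}_k)$ is a minimum two-level rectilinear Steiner tree, chosen among all minimum ones with $T^{\star}_{top}$ as large as possible, so that for each $i$ there is a connection point $q^{\star}_i\in T^{\star}_{top}\cap T^{\star}_i\cap B(P_i)$. *)

From HB Require Import structures.
From mathcomp Require Import all_boot all_order all_algebra.
From mathcomp Require Import reals.
Set Implicit Arguments. Unset Strict Implicit. Unset Printing Implicit Defensive.
Import Order.TTheory GRing.Theory Num.Theory.
Local Open Scope ring_scope.

Section Defs.
Variable R : realType.

Definition point := (R * R)%type.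

Definition dist1 (p q : point) : R := `|p.1 - q.1| + `|p.2 - q.2|.

Definition xmin (S : seq point) : R := \big[Num.min/(head (0,0) S).1]_(p <- S) p.1.
Definition xmax (S : seq point) : R := \big[Num.max/(head (0,0) S).1]_(p <- S) p.1.
Definition ymin (S : seq point) : R := \big[Num.min/(head (0,0) S).2]_(p <- S) p.2.
Definition ymax (S : seq point) : R := \big[Num.max/(head (0,0) S).2]_(p <- S) p.2.
Definition bwidth (S : seq point) : R := xmax S - xmin S.
Definition bheight (S : seq point) : R := ymax S - ymin S.
Definition lbox (S : seq point) : R := bwidth S + bheight S.
Definition in_box (S : seq point) (p : point) : Prop :=
  xmin S <= p.1 <= xmax S /\ ymin S <= p.2 <= ymax S.
Definition center (S : seq point) : point :=
  ((xmin S + xmax S) / 2, (ymin S + ymax S) / 2).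

Definition complete (S : seq point) : Prop :=
  let c := center S in
  [/\ (exists2 p, p \in S & c.1 < p.1 /\ c.2 < p.2),
      (exists2 p, p \in S & p.1 < c.1 /\ c.2 < p.2),
      (exists2 p, p \in S & p.1 < c.1 /\ p.2 < c.2) &
      (exists2 p, p \in S & c.1 < p.1 /\ p.2 < c.2)].

(* (swap, sx, sy) : first optionally swap the coordinates, then optionally
   negate the first / second coordinate.  These are exactly the 8 symmetries. *)
Definition sym := (bool * bool * bool)%type.
Definition sgn (b : bool) (x : R) : R := if b then - x else x.
Definition sym_app (g : sym) (p : point) : point :=
  let: (sw, sx, sy) := g in
  let q := if sw then (p.2, p.1) else p in (sgn sx q.1, sgn sy q.2).
Definition sym_inv (g : sym) (p : point) : point :=
  let: (sw, sx, sy) := g in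
  let q := (sgn sx p.1, sgn sy p.2) in if sw then (q.2, q.1) else q.
(* coordinates of p in the (normalised) coordinate system of S:
   origin at the centre of B(S), then the symmetry g is applied *)
Definition loc (S : seq point) (g : sym) (p : point) : point :=
  sym_app g (p.1 - (center S).1, p.2 - (center S).2).
Definition unloc (S : seq point) (g : sym) (v : point) : point :=
  let w := sym_inv g v in (w.1 + (center S).1, w.2 + (center S).2).

Definition tree := (seq point * seq (point * point))%type.

Definition on_seg (e : point * point) (p : point) : Prop :=
  exists2 lam : R, 0 <= lam <= 1 &
    p = (e.1.1 + lam * (e.2.1 - e.1.1), e.1.2 + lam * (e.2.2 - e.1.2)).

Definition adj (E : seq (point * point)) : rel point :=
  fun u v => ((u, v) \in E) || ((v, u) \in E).

Definition connected_graph (V : seq point) (E : seq (point * point)) : Prop :=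
  forall u v, u \in V -> v \in V ->
    exists s : seq point, path (adj E) u s /\ last u s = v.

Definition is_RST (S : seq point) (T : tree) : Prop :=
  let: (V, E) := T in
  [/\ V != [::] /\ uniq V, {subset S <= V},
      (forall e, e \in E -> [/\ e.1 \in V, e.2 \in V, e.1 != e.2 &
                               (e.1.1 = e.2.1 \/ e.1.2 = e.2.2)]),
      (connected_graph V E /\ size E = (size V).-1) &
      (* embedded in the plane: edges meet only at common endpoints and
         no vertex lies in the relative interior of an edge *)
      (forall e f p, e \in E -> f \in E -> e != f -> on_seg e p -> on_seg f p ->
          (p = e.1 \/ p = e.2) /\ (p = f.1 \/ p = f.2)) /\
      (forall v e, v \in V -> e \in E -> on_seg e v -> v = e.1 \/ v = e.2)].

Definition tree_pts (T : tree) (p : point) : Prop :=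
  p \in T.1 \/ exists2 e, e \in T.2 & on_seg e p.

Definition tree_len (T : tree) : R := \sum_(e <- T.2) dist1 e.1 e.2.

Definition intersects (T T' : tree) : Prop :=
  exists p, tree_pts T p /\ tree_pts T' p.

Definition is_two_level (k : nat) (P : 'I_k -> seq point)
  (top : tree) (Ts : 'I_k -> tree) : Prop :=
  is_RST [::] top /\ forall j, is_RST (P j) (Ts j) /\ intersects top (Ts j).

Definition two_level_len (k : nat) (top : tree) (Ts : 'I_k -> tree) : R :=
  tree_len top + \sum_(j < k) tree_len (Ts j).

(* minimum two-level tree, with l(T_top) maximal among the minimum ones *)
Definition is_opt_two_level (k : nat) (P : 'I_k -> seq point)
  (top : tree) (Ts : 'I_k -> tree) : Prop :=
  [/\ is_two_level P top Ts,
      (forall top' Ts', is_two_level P top' Ts' ->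
          two_level_len top Ts <= two_level_len top' Ts') &
      (forall top' Ts', is_two_level P top' Ts' ->
          two_level_len top' Ts' = two_level_len top Ts ->
          tree_len top' <= tree_len top)].

Definition is_partition (k : nat) (P : 'I_k -> seq point) : Prop :=
  (forall j, P j != [::]) /\
  (forall j j', j != j' -> forall p, p \in P j -> p \notin P j').

End Defs.

From HB Require Import structures.
From mathcomp Require Import all_boot all_order all_algebra.
From mathcomp Require Import reals.
From mathcomp Require Import lra.
Set Implicit Arguments. Unset Strict Implicit. Unset Printing Implicit Defensive.
Import Order.TTheory GRing.Theory Num.Theory.
Local Open Scope ring_scope.

(* Translating to the centre of B(P_i) and applying the normalising symmetry
   preserve the l1 distance, so we may work in local coordinates, where the
   box is [-a, a] x [-b, b] with a + b = l(B(P_i))/2 and q_i = (t, t) with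
   t >= 0.  If t <= x then |x - t| <= a - t and |y - t| <= b + t, and the t's
   cancel. *)

Lemma norm_subr_diag_le (R : realDomainType) (x y t a b : R) :
  0 <= t -> `|x| <= a -> `|y| <= b -> t <= x \/ t <= y ->
  `|x - t| + `|y - t| <= a + b.
Proof.
move=> t_ge0 xa yb side.
wlog tx : x y a b xa yb {side} / t <= x.
  move=> wlog; case: side => [tx | ty]; first exact: wlog.
  by rewrite addrC [a + b]addrC; apply: wlog.
have xt : `|x - t| <= a - t.
  by rewrite ger0_norm ?subr_ge0 // lerB // (le_trans (ler_norm x)).
have yt : `|y - t| <= b + t.
  by rewrite (le_trans (ler_normB y t)) // (ger0_norm t_ge0) lerD.
by rewrite (le_trans (lerD xt yt)) // addrCA subrK addrC.
Qed.

Section LocalCoordinates.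
Variable R : realType.
Implicit Types (S : seq (point R)) (g : sym) (p u v : point R).

Lemma sym_appK g : cancel (@sym_app R g) (sym_inv g).
Proof.
by case: g => [[[] []] []] [x y]; rewrite /sym_app /sym_inv /sgn /= ?opprK.
Qed.

Lemma unloc_loc S g : cancel (loc S g) (unloc S g).
Proof. by move=> [x y]; rewrite /unloc /loc sym_appK /= !subrK. Qed.

Lemma dist1_sym_inv g u v : dist1 (sym_inv g u) (sym_inv g v) = dist1 u v.
Proof.
case: g => [[sw sx] sy]; rewrite /dist1 /sym_inv /sgn.
by case: sw; case: sx; case: sy; rewrite /= -?opprD ?normrN // addrC.
Qed.

Lemma dist1_unloc S g u v : dist1 (unloc S g u) (unloc S g v) = dist1 u v.
Proof.
have subrD2r (x y z : R) : x + z - (y + z) = x - y.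
  by rewrite opprD addrACA subrr addr0.
by rewrite /dist1 /unloc /= !subrD2r -/(dist1 _ _) dist1_sym_inv.
Qed.

Lemma in_box_center S p : in_box S p ->
  `|p.1 - (center S).1| <= bwidth S / 2 /\
  `|p.2 - (center S).2| <= bheight S / 2.
Proof.
rewrite /center /bwidth /bheight /= => -[/andP[x0 x1] /andP[y0 y1]].
by rewrite !ler_norml; split; apply/andP; split; lra.
Qed.

Lemma sym_app_norm_le g v a b : `|v.1| <= a -> `|v.2| <= b ->
  let w := sym_app g v in
  (`|w.1| <= a /\ `|w.2| <= b) \/ (`|w.1| <= b /\ `|w.2| <= a).
Proof.
case: g => [[sw sx] sy] va vb /=.
case: sw; case: sx; case: sy; rewrite /sgn /= ?normrN; by [right | left].
Qed.

Lemma loc_norm_le S g p : in_box S p ->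
  let w := loc S g p in
  (`|w.1| <= bwidth S / 2 /\ `|w.2| <= bheight S / 2) \/
  (`|w.1| <= bheight S / 2 /\ `|w.2| <= bwidth S / 2).
Proof. by move=> /in_box_center[xa yb]; apply: (@sym_app_norm_le g (_, _)). Qed.

Lemma lbox_half S : lbox S / 2 = bwidth S / 2 + bheight S / 2.
Proof. by rewrite /lbox mulrDl. Qed.

End LocalCoordinates.

Theorem lemma7 (R : realType) (k : nat) (P : 'I_k -> seq (point R))
  (beta : R) (top : tree R) (Ts : 'I_k -> tree R) (i : 'I_k)
  (g : sym) (tmax t1 t2 : R) (qstar : point R) :
  is_partition P ->
  0 <= beta <= 1 ->
  is_opt_two_level P top Ts ->
  (* B(P_i) is incomplete *)
  ~ complete (P i) ->
  (* the normalising symmetry g: in the coordinates of P_i no point lies in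
     the lower-left quadrant and the width of the box is at least its height *)
  let Q := map (loc (P i) g) (P i) in
  (forall p, p \in Q -> ~ (p.1 < 0 /\ p.2 < 0)) ->
  bheight Q <= bwidth Q ->
  tmax = bheight Q / 2 ->
  (* t_i^1 = max { s in [0, tmax] | no p in P_i with x < s and y < s } *)
  (0 <= t1 <= tmax /\ forall p, p \in Q -> ~ (p.1 < t1 /\ p.2 < t1)) ->
  (forall s, 0 <= s <= tmax -> (forall p, p \in Q -> ~ (p.1 < s /\ p.2 < s)) ->
     s <= t1) ->
  (* t_i^2 = min { s in [0, tmax] | no p in P_i with x > s and y > s } *)
  (0 <= t2 <= tmax /\ forall p, p \in Q -> ~ (t2 < p.1 /\ t2 < p.2)) ->
  (forall s, 0 <= s <= tmax -> (forall p, p \in Q -> ~ (s < p.1 /\ s < p.2)) ->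
     t2 <= s) ->
  let t := Num.min t1 (Num.min t2 (beta * tmax)) in
  let q := unloc (P i) g (t, t) in
  (* q*_i is a connection point of T* *)
  tree_pts top qstar -> tree_pts (Ts i) qstar -> in_box (P i) qstar ->
  (* q*_i lies in { (x,y) in B(P_i) : x >= (q_i)_x or y >= (q_i)_y } *)
  (t <= (loc (P i) g qstar).1 \/ t <= (loc (P i) g qstar).2) ->
  dist1 qstar q <= lbox (P i) / 2.
Proof.
move=> _ /andP[beta_ge0 _] _ _ Q _ _ _ [/andP[t1_ge0 t1_le] _] _
  [/andP[t2_ge0 _] _] _ t q _ _ qstar_box qstar_side.
have t_ge0 : 0 <= t.
  by rewrite !le_min t1_ge0 t2_ge0 mulr_ge0 // (le_trans t1_ge0).
rewrite /q -[qstar](unloc_loc (P i) g) dist1_unloc lbox_half.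
have [[] | []] := loc_norm_le g qstar_box => [xa yb | xb ya].
- exact: norm_subr_diag_le.
- by rewrite addrC; apply: norm_subr_diag_le.
Qed.
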